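(* Let $\lambda=\frac{\sqrt5+1}{2}$ and $D\mathcal{G}_{\mathbf 0}=\mathrm{diag}(-1,\lambda^{-1},\lambda)$. Let $M>0$ and $C>1$. Then there exists $\xi_0\in(0,\lambda-1)$ such that for all $\xi\in(0,\xi_0)$ the following holds. Suppose $G=(G_x,G_y,G_z):\mathbb{R}^3\to\mathbb{R}^3$ is a $C^2$ diffeomorphism such that (i) $\|\nabla\partial_\beta G_\alpha\|<M$ for all $\alpha,\beta\in\{x,y,z\}$, and (ii) $G$ is $\xi$-close to the linear map $D\mathcal{G}_{\mathbf 0}$ in the $C^1$ topology. Suppose $\gamma=(\gamma_x,\gamma_y,\gamma_z)$ is a $C^2$ curve in $\mathbb{R}^3$ such that for all $t$: (1) $\|\gamma'(t)\|<C$; (2) $\gamma_x(t)=t$; (3) $\frac{\lambda-\xi-1}{4}|\gamma_z''(t)|>3MC^2$; (4) $\frac{\lambda-\xi-1}{4}|\gamma_z''(t)|>\xi|\gamma_y''(t)|$. Then for all $t$, $$\Big|\tfrac{d^2}{dt^2}G_z\circ\gamma(t)\Big|>|\gamma_z''(t)|+\tfrac{\lambda-\xi-1}{2}|\gamma_z''(t)|$$ and $$\tfrac{\lambda-\xi-1}{4}\Big|\tfrac{d^2}{dt^2}G_z\circ\gamma(t)\Big|>\xi\Big|\tfrac{d^2}{dt^2}G_y\circ\gamma(t)\Big|+\tfrac{(\lambda-1)^2}{8}|\gamma_z''(t)|.$$ *)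

From Stdlib Require Import Reals Lra.
From Coquelicot Require Import Coquelicot.
Open Scope R_scope.

Definition pt : Type := (R * R * R)%type.
Inductive ax : Type := AX | AY | AZ.

Definition coord (c : ax) (p : pt) : R :=
  match c, p with
  | AX, (x, _, _) => x
  | AY, (_, y, _) => y
  | AZ, (_, _, z) => z
  end.

Definition upd (c : ax) (p : pt) (s : R) : pt :=
  match c, p with
  | AX, (_, y, z) => (s, y, z)
  | AY, (x, _, z) => (x, s, z)
  | AZ, (x, y, _) => (x, y, s)
  end.

Definition partial (c : ax) (f : pt -> R) (p : pt) : R :=
  Derive (fun s => f (upd c p s)) (coord c p).

Definition ex_partial (c : ax) (f : pt -> R) (p : pt) : Prop :=
  ex_derive (fun s => f (upd c p s)) (coord c p).

Definition C2_fun (f : pt -> R) : Prop :=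
  (forall p, continuous f p) /\
  (forall b p, ex_partial b f p /\ continuous (partial b f) p) /\
  (forall b d p, ex_partial d (partial b f) p /\
                 continuous (partial d (partial b f)) p).

Definition gcomp (G : pt -> pt) (c : ax) : pt -> R := fun p => coord c (G p).

Definition C2_map (G : pt -> pt) : Prop := forall c, C2_fun (gcomp G c).

Definition C2_diffeo (G : pt -> pt) : Prop :=
  C2_map G /\ exists H : pt -> pt, C2_map H /\
    (forall p, H (G p) = p) /\ (forall p, G (H p) = p).

Definition lam : R := (sqrt 5 + 1) / 2.

Definition Ldiag (c : ax) : R :=
  match c with AX => -1 | AY => / lam | AZ => lam end.

Definition Lmat (a b : ax) : R :=
  match a, b with
  | AX, AX | AY, AY | AZ, AZ => Ldiag a
  | _, _ => 0
  end.

Definition Lmap (p : pt) : pt :=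
  (Ldiag AX * coord AX p, Ldiag AY * coord AY p, Ldiag AZ * coord AZ p).

Definition C1_close (xi : R) (G : pt -> pt) : Prop :=
  forall p,
    (forall a, Rabs (gcomp G a p - coord a (Lmap p)) < xi) /\
    (forall a b, Rabs (partial b (gcomp G a) p - Lmat a b) < xi).

Definition grad_norm (f : pt -> R) (p : pt) : R :=
  sqrt ((partial AX f p)^2 + (partial AY f p)^2 + (partial AZ f p)^2).

Definition ccomp (g : R -> pt) (c : ax) : R -> R := fun t => coord c (g t).

Definition C2_curve_on (a b : R) (g : R -> pt) : Prop :=
  forall c t, a < t < b ->
    ex_derive (ccomp g c) t /\ ex_derive (Derive (ccomp g c)) t /\
    continuous (Derive_n (ccomp g c) 2) t.

Definition speed (g : R -> pt) (t : R) : R :=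
  sqrt ((Derive (ccomp g AX) t)^2 + (Derive (ccomp g AY) t)^2
        + (Derive (ccomp g AZ) t)^2).

(* Two applications of the chain rule give
     (G_a o gamma)'' = D^2 G_a (gamma', gamma') + grad G_a . gamma''.
   The Hessian term is below 3 M C^2 by the bounds on the second partials and on
   the speed, and gamma_x'' = 0 since gamma_x(t) = t.  C^1-closeness to
   diag(-1, 1/lambda, lambda) makes d_z G_z close to lambda and d_y G_z, d_z G_y
   close to 0, so in (G_z o gamma)'' the term lambda gamma_z'' dominates, the
   remaining terms being absorbed by hypotheses (3) and (4); xi0 = 1/100 leaves
   enough room in the resulting numerical inequalities. *)

From Stdlib Require Import Reals Lra Psatz.
From Coquelicot Require Import Coquelicot.
Open Scope R_scope.

Lemma Rabs_le_between a b c :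
  Rmin a b <= c <= Rmax a b -> Rabs (c - a) <= Rabs (b - a).
Proof.
intros [H1 H2]; unfold Rmin, Rmax in *; destruct (Rle_dec a b);
  unfold Rabs; repeat destruct Rcase_abs; lra.
Qed.

Lemma MVT_Rabs (g dg : R -> R) x0 x1 :
  (forall s, is_derive g s (dg s)) ->
  exists c, Rabs (c - x0) <= Rabs (x1 - x0) /\ g x1 - g x0 = dg c * (x1 - x0).
Proof.
intros Hg; destruct (MVT_gen g x0 x1 dg) as [c [Hc E]].
- intros s _; apply Hg.
- intros s _; apply continuity_pt_filterlim.
  apply (ex_derive_continuous (K := R_AbsRing) (V := R_NormedModule)).
  eexists; apply Hg.
- exists c; split; [apply Rabs_le_between|]; assumption.
Qed.

Lemma Rabs_mul_approx L' L q d eta :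
  Rabs (L' - L) < eta -> Rabs (q - d) < eta -> eta <= 1 ->
  Rabs (L' * q - L * d) <= eta * (Rabs d + 1 + Rabs L).
Proof.
intros HL Hq Heta.
replace (L' * q - L * d) with ((L' - L) * q + L * (q - d)) by ring.
eapply Rle_trans; [apply Rabs_triang|]; rewrite !Rabs_mult.
assert (Rabs q <= Rabs d + 1).
{ replace q with (d + (q - d)) by ring.
  eapply Rle_trans; [apply Rabs_triang|]; lra. }
pose proof (Rabs_pos (L' - L)); pose proof (Rabs_pos (q - d));
pose proof (Rabs_pos L); pose proof (Rabs_pos q); nra.
Qed.

Lemma continuous_coordwise (F : ax -> pt -> R) (x y z : R) :
  (forall b, continuous (F b) (x, y, z)) -> forall eps, 0 < eps -> exists d, 0 < d /\
  forall b x' y' z', Rabs (x' - x) < d -> Rabs (y' - y) < d -> Rabs (z' - z) < d ->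
  Rabs (F b (x', y', z') - F b (x, y, z)) < eps.
Proof.
intros Hc eps Heps.
assert (Hb : forall b, locally (x, y, z) (fun q => ball (F b (x, y, z)) eps (F b q)))
  by (intros b; apply (Hc b), (locally_ball _ (mkposreal eps Heps))).
destruct (filter_and _ _ (filter_and _ _ (Hb AX) (Hb AY)) (Hb AZ)) as [d Hd].
exists d; split; [apply cond_pos|].
intros b x' y' z' Hx Hy Hz.
destruct (Hd (x', y', z') (conj (conj Hx Hy) Hz)) as [[HX HY] HZ].
destruct b; assumption.
Qed.

Lemma difference_quotient_near (u : R -> R) t du eta d :
  is_derive u t du -> 0 < eta -> 0 < d -> exists delta, 0 < delta /\
  forall h, h <> 0 -> Rabs h < delta ->
  Rabs ((u (t + h) - u t) / h - du) < eta /\ Rabs (u (t + h) - u t) < d.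
Proof.
intros Hu Heta Hd; apply is_derive_Reals in Hu.
destruct (Hu eta Heta) as [du' Hdu'].
pose proof (Rabs_pos du).
exists (Rmin du' (d / (Rabs du + eta))); split.
{ apply Rmin_glb_lt; [apply cond_pos | apply Rdiv_lt_0_compat; lra]. }
intros h Hh0 Hh.
pose proof (Rmin_l du' (d / (Rabs du + eta))) as Hmin1.
pose proof (Rmin_r du' (d / (Rabs du + eta))) as Hmin2.
assert (Hq := Hdu' h Hh0 ltac:(lra)); split; [exact Hq|].
set (q := (u (t + h) - u t) / h) in Hq.
replace (u (t + h) - u t) with (q * h) by (unfold q; field; exact Hh0).
assert (Rabs q <= Rabs du + eta).
{ replace q with (du + (q - du)) by ring.
  eapply Rle_trans; [apply Rabs_triang|]; lra. }
rewrite Rabs_mult.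
apply Rle_lt_trans with ((Rabs du + eta) * Rabs h).
- apply Rmult_le_compat_r; [apply Rabs_pos | assumption].
- apply Rlt_le_trans with ((Rabs du + eta) * (d / (Rabs du + eta))).
  + apply Rmult_lt_compat_l; lra.
  + right; field; lra.
Qed.

Lemma exists_small_factor S eps :
  0 <= S -> 0 < eps -> exists eta, 0 < eta /\ eta <= 1 /\ eta * S < eps.
Proof.
intros HS Heps; exists (Rmin 1 (eps / (S + 1))); repeat split.
- apply Rmin_glb_lt; [lra | apply Rdiv_lt_0_compat; lra].
- apply Rmin_l.
- apply Rle_lt_trans with (eps / (S + 1) * S).
  + apply Rmult_le_compat_r; [exact HS | apply Rmin_r].
  + apply Rmult_lt_reg_r with (S + 1); [lra|].
    replace (eps / (S + 1) * S * (S + 1)) with (eps * S) by (field; lra); nra.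
Qed.

Section ChainRule.

Variable f : pt -> R.
Hypothesis f_partials : forall b p, ex_partial b f p.

Lemma increment_by_partials x y z x' y' z' : exists c1 c2 c3,
  Rabs (c1 - x) <= Rabs (x' - x) /\ Rabs (c2 - y) <= Rabs (y' - y) /\
  Rabs (c3 - z) <= Rabs (z' - z) /\
  f (x', y', z') - f (x, y, z) =
    partial AX f (c1, y', z') * (x' - x) + partial AY f (x, c2, z') * (y' - y)
    + partial AZ f (x, y, c3) * (z' - z).
Proof.
destruct (MVT_Rabs (fun s => f (s, y', z')) (fun s => partial AX f (s, y', z')) x x')
  as [c1 [Hc1 E1]]; [intros s; apply Derive_correct, (f_partials AX (s, y', z'))|].
destruct (MVT_Rabs (fun s => f (x, s, z')) (fun s => partial AY f (x, s, z')) y y')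
  as [c2 [Hc2 E2]]; [intros s; apply Derive_correct, (f_partials AY (x, s, z'))|].
destruct (MVT_Rabs (fun s => f (x, y, s)) (fun s => partial AZ f (x, y, s)) z z')
  as [c3 [Hc3 E3]]; [intros s; apply Derive_correct, (f_partials AZ (x, y, s))|].
exists c1, c2, c3; repeat split; try assumption.
rewrite <- E1, <- E2, <- E3; ring.
Qed.

Lemma is_derive_comp_partials (u v w : R -> R) t du dv dw :
  (forall b, continuous (partial b f) (u t, v t, w t)) ->
  is_derive u t du -> is_derive v t dv -> is_derive w t dw ->
  is_derive (fun s => f (u s, v s, w s)) t
    (partial AX f (u t, v t, w t) * du + partial AY f (u t, v t, w t) * dv
     + partial AZ f (u t, v t, w t) * dw).
Proof.
intros Hc Hu Hv Hw; apply is_derive_Reals; intros eps Heps.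
set (Lx := partial AX f (u t, v t, w t)); set (Ly := partial AY f (u t, v t, w t));
set (Lz := partial AZ f (u t, v t, w t)).
set (S := Rabs du + 1 + Rabs Lx + (Rabs dv + 1 + Rabs Ly) + (Rabs dw + 1 + Rabs Lz)).
destruct (exists_small_factor S eps) as (eta & Heta & Heta1 & HetaS);
  [unfold S; pose proof (Rabs_pos du); pose proof (Rabs_pos dv); pose proof (Rabs_pos dw);
   pose proof (Rabs_pos Lx); pose proof (Rabs_pos Ly); pose proof (Rabs_pos Lz); lra
  | exact Heps |].
destruct (continuous_coordwise (fun b => partial b f) _ _ _ Hc eta Heta) as [d [Hd Cf]].
destruct (difference_quotient_near u t du eta d Hu Heta Hd) as [eu [Heu Qu]].
destruct (difference_quotient_near v t dv eta d Hv Heta Hd) as [ev [Hev Qv]].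
destruct (difference_quotient_near w t dw eta d Hw Heta Hd) as [ew [Hew Qw]].
assert (Hdelta : 0 < Rmin eu (Rmin ev ew)) by (repeat apply Rmin_glb_lt; lra).
exists (mkposreal _ Hdelta); simpl; intros h Hh0 Hh.
pose proof (Rmin_l eu (Rmin ev ew)); pose proof (Rmin_r eu (Rmin ev ew));
pose proof (Rmin_l ev ew); pose proof (Rmin_r ev ew).
destruct (Qu h Hh0 ltac:(lra)) as [Hqu Hiu].
destruct (Qv h Hh0 ltac:(lra)) as [Hqv Hiv].
destruct (Qw h Hh0 ltac:(lra)) as [Hqw Hiw].
destruct (increment_by_partials (u t) (v t) (w t) (u (t + h)) (v (t + h)) (w (t + h)))
  as (c1 & c2 & c3 & Hc1 & Hc2 & Hc3 & E).
assert (Rabs (u t - u t) < d /\ Rabs (v t - v t) < d) as [Hu0 Hv0]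
  by (rewrite !Rminus_diag, Rabs_R0; lra).
pose proof (Rabs_mul_approx _ _ _ _ _
  (Cf AX c1 (v (t + h)) (w (t + h)) ltac:(lra) ltac:(lra) ltac:(lra)) Hqu Heta1) as Tx.
pose proof (Rabs_mul_approx _ _ _ _ _
  (Cf AY (u t) c2 (w (t + h)) ltac:(lra) ltac:(lra) ltac:(lra)) Hqv Heta1) as Ty.
pose proof (Rabs_mul_approx _ _ _ _ _
  (Cf AZ (u t) (v t) c3 ltac:(lra) ltac:(lra) ltac:(lra)) Hqw Heta1) as Tz.
replace ((f (u (t + h), v (t + h), w (t + h)) - f (u t, v t, w t)) / h
         - (Lx * du + Ly * dv + Lz * dw))
  with ((partial AX f (c1, v (t + h), w (t + h)) * ((u (t + h) - u t) / h) - Lx * du)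
      + (partial AY f (u t, c2, w (t + h)) * ((v (t + h) - v t) / h) - Ly * dv)
      + (partial AZ f (u t, v t, c3) * ((w (t + h) - w t) / h) - Lz * dw))
  by (rewrite E; field; exact Hh0).
eapply Rle_lt_trans; [apply Rabs_triang|].
eapply Rle_lt_trans; [apply Rplus_le_compat_r, Rabs_triang|].
subst S Lx Ly Lz; lra.
Qed.

End ChainRule.

Lemma locally_open_interval (P : R -> Prop) a b t :
  a < t < b -> (forall s, a < s < b -> P s) -> locally t P.
Proof.
intros Ht HP.
apply (filter_imp (fun s => a < s /\ s < b)); [intros s Hs; apply HP, Hs|].
apply (open_and _ _ (open_gt a) (open_lt b)), Ht.
Qed.

Lemma Derive_n_2_id_on (u : R -> R) a b t :
  (forall s, a < s < b -> u s = s) -> a < t < b -> Derive_n u 2 t = 0.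
Proof.
intros Hu Ht.
rewrite (Derive_n_ext_loc u id 2 t (locally_open_interval _ a b t Ht Hu)); simpl.
rewrite (Derive_ext _ (fun _ => 1) _ Derive_id); apply Derive_const.
Qed.

Definition velocity (g : R -> pt) (t : R) : pt :=
  (Derive (ccomp g AX) t, Derive (ccomp g AY) t, Derive (ccomp g AZ) t).

Definition acceleration (g : R -> pt) (t : R) : pt :=
  (Derive_n (ccomp g AX) 2 t, Derive_n (ccomp g AY) 2 t, Derive_n (ccomp g AZ) 2 t).

Definition grad_dot (f : pt -> R) (p v : pt) : R :=
  partial AX f p * coord AX v + partial AY f p * coord AY v + partial AZ f p * coord AZ v.

Definition hessian_form (f : pt -> R) (p v : pt) : R :=
  grad_dot (partial AX f) p v * coord AX v + grad_dot (partial AY f) p v * coord AY v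
  + grad_dot (partial AZ f) p v * coord AZ v.

Lemma pt_eta (p : pt) : (coord AX p, coord AY p, coord AZ p) = p.
Proof. destruct p as [[x y] z]; reflexivity. Qed.

Lemma is_derive_comp_curve (f : pt -> R) (g : R -> pt) t :
  (forall b p, ex_partial b f p) -> (forall b, continuous (partial b f) (g t)) ->
  (forall c, ex_derive (ccomp g c) t) ->
  is_derive (fun s => f (g s)) t (grad_dot f (g t) (velocity g t)).
Proof.
intros Hf Hc Hg.
apply is_derive_ext with (fun s => f (ccomp g AX s, ccomp g AY s, ccomp g AZ s)).
{ intros s; unfold ccomp; rewrite pt_eta; reflexivity. }
assert (Hgt : g t = (ccomp g AX t, ccomp g AY t, ccomp g AZ t))
  by (unfold ccomp; symmetry; apply pt_eta).
unfold grad_dot; rewrite Hgt in Hc |- *.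
apply is_derive_comp_partials; [exact Hf | exact Hc | apply Derive_correct, Hg ..].
Qed.

Lemma Derive_n_2_comp_curve (f : pt -> R) (g : R -> pt) a b t :
  C2_fun f -> C2_curve_on a b g -> a < t < b ->
  Derive_n (fun s => f (g s)) 2 t =
    hessian_form f (g t) (velocity g t) + grad_dot f (g t) (acceleration g t).
Proof.
intros (_ & Hf1 & Hf2) Hg Ht.
apply is_derive_unique.
apply is_derive_ext_loc with (fun s => grad_dot f (g s) (velocity g s)).
{ apply (locally_open_interval _ a b t Ht); intros s Hs.
  symmetry; apply is_derive_unique, is_derive_comp_curve;
    [apply Hf1 | intros; apply Hf1 | intros c; apply (Hg c s Hs)]. }
assert (Hp : forall c, is_derive (fun s => partial c f (g s)) t
                         (grad_dot (partial c f) (g t) (velocity g t))).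
{ intros c; apply is_derive_comp_curve;
    [apply Hf2 | intros; apply Hf2 | intros d; apply (Hg d t Ht)]. }
assert (Hv : forall c, is_derive (Derive (ccomp g c)) t (Derive_n (ccomp g c) 2 t))
  by (intros c; apply Derive_correct, (Hg c t Ht)).
replace (hessian_form _ _ _ + _) with
  ((grad_dot (partial AX f) (g t) (velocity g t) * Derive (ccomp g AX) t
    + partial AX f (g t) * Derive_n (ccomp g AX) 2 t)
 + (grad_dot (partial AY f) (g t) (velocity g t) * Derive (ccomp g AY) t
    + partial AY f (g t) * Derive_n (ccomp g AY) 2 t)
 + (grad_dot (partial AZ f) (g t) (velocity g t) * Derive (ccomp g AZ) t
    + partial AZ f (g t) * Derive_n (ccomp g AZ) 2 t))
  by (unfold hessian_form, grad_dot; simpl; ring).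
apply is_derive_ext with (fun s =>
  partial AX f (g s) * Derive (ccomp g AX) s + partial AY f (g s) * Derive (ccomp g AY) s
  + partial AZ f (g s) * Derive (ccomp g AZ) s); [reflexivity|].
apply (is_derive_plus (K := R_AbsRing) (V := R_NormedModule) (fun s => _ + _));
  [apply (is_derive_plus (K := R_AbsRing) (V := R_NormedModule) (fun s => _))|];
  apply (is_derive_mult (K := R_AbsRing) (fun s => partial _ f (g s)));
  [apply Hp | apply Hv | apply Rmult_comm | apply Hp | apply Hv | apply Rmult_comm
  | apply Hp | apply Hv | apply Rmult_comm].
Qed.

Lemma Rabs_lin3_le K a1 a2 a3 x y z :
  Rabs a1 <= K -> Rabs a2 <= K -> Rabs a3 <= K ->
  Rabs (a1 * x + a2 * y + a3 * z) <= K * (Rabs x + Rabs y + Rabs z).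
Proof.
intros H1 H2 H3.
eapply Rle_trans; [apply Rabs_triang|].
eapply Rle_trans; [apply Rplus_le_compat_r, Rabs_triang|].
rewrite !Rabs_mult.
pose proof (Rabs_pos x); pose proof (Rabs_pos y); pose proof (Rabs_pos z); nra.
Qed.

Lemma Rabs_sum3_sqr_le x y z :
  (Rabs x + Rabs y + Rabs z) ^ 2 <= 3 * (x ^ 2 + y ^ 2 + z ^ 2).
Proof.
rewrite <- (pow2_abs x), <- (pow2_abs y), <- (pow2_abs z).
pose proof (pow2_ge_0 (Rabs x - Rabs y)); pose proof (pow2_ge_0 (Rabs x - Rabs z));
pose proof (pow2_ge_0 (Rabs y - Rabs z)); nra.
Qed.

Lemma Rabs_partial_le_grad_norm (f : pt -> R) p b :
  Rabs (partial b f p) <= grad_norm f p.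
Proof.
unfold grad_norm; rewrite <- sqrt_Rsqr_abs; apply sqrt_le_1_alt; unfold Rsqr.
destruct b; nra.
Qed.

Lemma Rabs_hessian_form_le (f : pt -> R) p v M :
  (forall b, grad_norm (partial b f) p <= M) ->
  Rabs (hessian_form f p v) <= 3 * M * (coord AX v ^ 2 + coord AY v ^ 2 + coord AZ v ^ 2).
Proof.
intros HM.
set (s := Rabs (coord AX v) + Rabs (coord AY v) + Rabs (coord AZ v)).
assert (Hgrad : forall b, Rabs (grad_dot (partial b f) p v) <= M * s).
{ intros b; apply Rabs_lin3_le;
    (eapply Rle_trans; [apply Rabs_partial_le_grad_norm | apply HM]). }
assert (HM0 : 0 <= M) by (eapply Rle_trans; [apply sqrt_pos | apply (HM AX)]).
apply Rle_trans with (M * s * s); [apply Rabs_lin3_le; apply Hgrad|].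
pose proof (Rabs_sum3_sqr_le (coord AX v) (coord AY v) (coord AZ v)) as Hs.
fold s in Hs; nra.
Qed.

Lemma Rabs_hessian_form_velocity_lt (f : pt -> R) (g : R -> pt) t M C :
  (forall b, grad_norm (partial b f) (g t) <= M) -> 0 < M -> speed g t < C ->
  Rabs (hessian_form f (g t) (velocity g t)) < 3 * M * C ^ 2.
Proof.
intros HM HM0 Hspeed.
eapply Rle_lt_trans; [apply Rabs_hessian_form_le, HM|]; cbn [coord velocity].
assert (Hsq : speed g t * speed g t =
   Derive (ccomp g AX) t ^ 2 + Derive (ccomp g AY) t ^ 2 + Derive (ccomp g AZ) t ^ 2)
  by (unfold speed; apply sqrt_sqrt; nra).
assert (0 <= speed g t) by apply sqrt_pos.
apply Rmult_lt_compat_l; [lra|].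
rewrite <- Hsq; nra.
Qed.

Lemma expansion_estimate l xi K a b Q sy sz :
  Rabs a < xi -> Rabs (b - l) < xi -> Rabs Q < K ->
  (l - xi - 1) / 4 * Rabs sz > K -> (l - xi - 1) / 4 * Rabs sz > xi * Rabs sy ->
  Rabs (Q + (a * sy + b * sz)) > Rabs sz + (l - xi - 1) / 2 * Rabs sz.
Proof.
intros Ha Hb HQ HK Hsy.
assert (Hb' : l - xi <= Rabs b) by (unfold Rabs in *; repeat destruct Rcase_abs; lra).
assert (Hbz : (l - xi) * Rabs sz <= Rabs b * Rabs sz)
  by (apply Rmult_le_compat_r; [apply Rabs_pos | exact Hb']).
assert (Hay : Rabs a * Rabs sy <= xi * Rabs sy)
  by (apply Rmult_le_compat_r; [apply Rabs_pos | lra]).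
assert (Rabs (b * sz) <= Rabs (Q + (a * sy + b * sz)) + Rabs (a * sy) + Rabs Q)
  by (unfold Rabs; repeat destruct Rcase_abs; lra).
rewrite !Rabs_mult in *; lra.
Qed.

Lemma cone_estimate l il xi K c e Q sy sz Z :
  1.6 < l < 1.65 -> 0 < il < 0.63 -> 0 < xi < 1 / 100 ->
  Rabs (c - il) < xi -> Rabs e < xi -> Rabs Q < K ->
  (l - xi - 1) / 4 * Rabs sz > K -> (l - xi - 1) / 4 * Rabs sz > xi * Rabs sy ->
  Z > Rabs sz + (l - xi - 1) / 2 * Rabs sz ->
  (l - xi - 1) / 4 * Z > xi * Rabs (Q + (c * sy + e * sz)) + (l - 1) ^ 2 / 8 * Rabs sz.
Proof.
intros Hl Hil Hxi Hc He HQ HK Hsy HZ.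
set (k := (l - xi - 1) / 4) in *.
replace ((l - xi - 1) / 2) with (2 * k) in HZ by (unfold k; field).
pose proof (Rabs_pos sz); pose proof (Rabs_pos sy).
assert (Hc' : Rabs c <= il + xi) by (unfold Rabs in *; repeat destruct Rcase_abs; lra).
assert (HW : Rabs (Q + (c * sy + e * sz)) <= K + (il + xi) * Rabs sy + xi * Rabs sz).
{ eapply Rle_trans; [apply Rabs_triang|].
  eapply Rle_trans; [apply Rplus_le_compat_l, Rabs_triang|].
  rewrite !Rabs_mult.
  pose proof (Rmult_le_compat_r (Rabs sy) _ _ ltac:(lra) Hc').
  pose proof (Rmult_le_compat_r (Rabs sz) _ _ ltac:(lra) (Rlt_le _ _ He)); lra. }
assert (Hnum : (l - 1) ^ 2 / 8 + xi * xi + xi * k + (il + xi) * k <= k * (1 + 2 * k)).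
{ assert (0.1475 < k < 0.1625) by (unfold k; lra).
  assert ((l - 1) ^ 2 <= 0.65 ^ 2) by nra.
  assert (xi * xi <= 0.01 * 0.01) by nra.
  assert ((il + 2 * xi) * k <= 0.65 * k) by nra.
  nra. }
assert (xi * Rabs (Q + (c * sy + e * sz)) <= xi * (K + (il + xi) * Rabs sy + xi * Rabs sz))
  by (apply Rmult_le_compat_l; lra).
assert (xi * ((il + xi) * Rabs sy) <= (il + xi) * (k * Rabs sz)) by nra.
assert (k * Z > k * (Rabs sz + 2 * k * Rabs sz))
  by (apply Rmult_lt_compat_l; [unfold k; lra | exact HZ]).
nra.
Qed.

Lemma lam_bounds : 1.6 < lam < 1.65 /\ 0 < / lam < 0.63.
Proof.
assert (H5 := sqrt_sqrt 5 ltac:(lra)); assert (H0 := sqrt_pos 5).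
assert (1.6 < lam < 1.65) by (unfold lam; nra).
assert (/ lam * lam = 1) by (field; lra).
assert (0 < / lam) by (apply Rinv_0_lt_compat; lra).
split; [assumption | split; nra].
Qed.

Theorem lemma2p6 (M C : R) (HM : 0 < M) (HC : 1 < C) :
  exists xi0 : R, 0 < xi0 < lam - 1 /\
  forall xi : R, 0 < xi < xi0 ->
  forall G : pt -> pt,
    C2_diffeo G ->
    (forall (al be : ax) (p : pt), grad_norm (partial be (gcomp G al)) p < M) ->
    C1_close xi G ->
  forall (g : R -> pt) (a b : R),
    a < b ->
    C2_curve_on a b g ->
    (forall t, a < t < b -> speed g t < C) ->
    (forall t, a < t < b -> ccomp g AX t = t) ->
    (forall t, a < t < b ->
       (lam - xi - 1) / 4 * Rabs (Derive_n (ccomp g AZ) 2 t) > 3 * M * C ^ 2) ->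
    (forall t, a < t < b ->
       (lam - xi - 1) / 4 * Rabs (Derive_n (ccomp g AZ) 2 t)
       > xi * Rabs (Derive_n (ccomp g AY) 2 t)) ->
  forall t, a < t < b ->
    Rabs (Derive_n (fun s => gcomp G AZ (g s)) 2 t)
      > Rabs (Derive_n (ccomp g AZ) 2 t)
        + (lam - xi - 1) / 2 * Rabs (Derive_n (ccomp g AZ) 2 t) /\
    (lam - xi - 1) / 4 * Rabs (Derive_n (fun s => gcomp G AZ (g s)) 2 t)
      > xi * Rabs (Derive_n (fun s => gcomp G AY (g s)) 2 t)
        + (lam - 1) ^ 2 / 8 * Rabs (Derive_n (ccomp g AZ) 2 t).
Proof.
destruct lam_bounds as [Hlam Hilam].
exists (1 / 100); split; [lra|].
intros xi Hxi G [HG _] HGM Hclose g a b _ Hg Hspeed Hx HzM Hzy t Ht.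
rewrite !(Derive_n_2_comp_curve _ g a b t (HG _) Hg Ht).
unfold grad_dot; cbn [coord acceleration].
rewrite (Derive_n_2_id_on _ a b t Hx Ht), !Rmult_0_r, !Rplus_0_l.
assert (Hhess : forall al, Rabs (hessian_form (gcomp G al) (g t) (velocity g t)) < 3 * M * C ^ 2)
  by (intros al; apply Rabs_hessian_form_velocity_lt;
      [intros be; left; apply HGM | exact HM | exact (Hspeed t Ht)]).
destruct (Hclose (g t)) as [_ HdG].
pose proof (HdG AZ AY) as HzyG; pose proof (HdG AZ AZ) as HzzG.
pose proof (HdG AY AY) as HyyG; pose proof (HdG AY AZ) as HyzG.
cbn [Lmat Ldiag] in *; rewrite Rminus_0_r in HzyG, HyzG.
assert (Hexp := expansion_estimate lam xi _ _ _ _ _ _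
                  HzyG HzzG (Hhess AZ) (HzM t Ht) (Hzy t Ht)).
split; [exact Hexp|].
eapply cone_estimate; eauto; lra.
Qed.
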